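(* Let $d\in\mathbb{N}$ and $\mathcal{M}\subseteq\mathbb{N}_0^d$. Then $\mathcal{M}$ is reflexive if and only if there is a game $\mathcal{X}\subseteq\mathbb{N}_0^d$ such that the limit $\mathcal{X}^\infty$ exists and $\mathcal{M}=\mathcal{X}^\infty$.
   Context: For $d\in\mathbb{N}$ a game is a set $\mathcal{M}\subseteq\mathbb{N}_0^d$ of moves ($\mathbb{N}$ = positive integers, $\mathbb{N}_0$ = nonnegative integers). From position $\boldsymbol x\in\mathbb{N}_0^d$ a player may move to $\boldsymbol y\in\mathbb{N}_0^d$ iff $\boldsymbol x-\boldsymbol y\in\mathcal{M}$ ($\boldsymbol y$ is an option of $\boldsymbol x$). Misère play: a player who cannot move wins. If $\boldsymbol 0\in\mathcal{M}$, every position is a draw and the set of P-positions is $P(\mathcal{M})=\varnothing$. Otherwise outcomes are defined recursively: a position is an N-position if it has no option or some option is a P-position; otherwise (its set of options is nonempty and consists only of N-positions) it is a P-position. $P(\mathcal{M})$ and $N(\mathcal{M})$ denote the sets of P- and N-positions. The $\star$-operator is $\mathcal{M}^\star=P(\mathcal{M})$ (viewed as a new game). Set $\mathcal{M}^0=\mathcal{M}$, $\mathcal{M}^i=(\mathcal{M}^{i-1})^\star$. The limit $\mathcal{M}^\infty=\lim_{i\to\infty}\mathcal{M}^i$ exists if for every $\boldsymbol x\in\mathbb{N}_0^d$ either $\boldsymbol x\in\mathcal{M}^i$ for all sufficiently large $i$ or $\boldsymbol x\notin\mathcal{M}^i$ for all sufficiently large $i$; then $\mathcal{M}^\infty$ is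 the set of $\boldsymbol x$ of the first kind. A game $\mathcal{M}$ is reflexive if $\mathcal{M}=\mathcal{M}^\star$. *)

From mathcomp Require Import all_boot.
Set Implicit Arguments. Unset Strict Implicit. Unset Printing Implicit Defensive.

(* Positions / moves in N_0^d: finite functions 'I_d -> nat (extensional equality). *)
Definition pos (d : nat) := {ffun 'I_d -> nat}.

Definition game (d : nat) := pos d -> Prop.

Definition zero_pos (d : nat) : pos d := [ffun => 0].

Definition is_option (d : nat) (M : game d) (x y : pos d) : Prop :=
  (forall j, y j <= x j) /\ M [ffun j => x j - y j].

Inductive Ppos (d : nat) (M : game d) : pos d -> Prop :=
  | Ppos_intro x :
      (exists y, is_option M x y) ->
      (forall y, is_option M x y -> Npos M y) -> Ppos M x
with Npos (d : nat) (M : game d) : pos d -> Prop :=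
  | Npos_noopt x : (forall y, ~ is_option M x y) -> Npos M x
  | Npos_P x y : is_option M x y -> Ppos M y -> Npos M x.

(* P(M): empty if 0 \in M (all draws), otherwise the P-positions. *)
Definition Pset (d : nat) (M : game d) : game d :=
  fun x => ~ M (zero_pos d) /\ Ppos M x.

Definition star (d : nat) (M : game d) : game d := Pset M.

Fixpoint star_iter (d : nat) (M : game d) (i : nat) : game d :=
  match i with
  | 0 => M
  | i.+1 => star (star_iter M i)
  end.

Definition game_eq (d : nat) (M N : game d) : Prop := forall x, M x <-> N x.

Definition reflexive_game (d : nat) (M : game d) : Prop := game_eq M (star M).

Definition limit_exists (d : nat) (M : game d) : Prop :=
  forall x, (exists n, forall i, n <= i -> star_iter M i x) \/
            (exists n, forall i, n <= i -> ~ star_iter M i x).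

(* M^\infty (meaningful when limit_exists M): the eventually-always-in positions. *)
Definition star_limit (d : nat) (M : game d) : game d :=
  fun x => exists n, forall i, n <= i -> star_iter M i x.

(** Whether x is a P-position of a game depends only on which moves lie in the
    box below x, since every play from x stays in that box.  Hence games
    agreeing on a box have the same P-positions in it.  If M is reflexive, all
    iterates of M equal M, so M is its own limit.  Conversely, if M is the
    limit of the iterates of X, then on the finite box below a given x all
    iterates from some index n onwards agree with M, so
    M^star(x) = (X^n)^star(x) = X^(n+1)(x) = M(x). *)

From Stdlib Require Import Classical.
From mathcomp Require Import all_boot.
Set Implicit Arguments. Unset Strict Implicit. Unset Printing Implicit Defensive.

Definition pos_le (d : nat) (z x : pos d) : Prop := forall j, z j <= x j.

Definition agree_below (d : nat) (M N : game d) (x : pos d) : Prop :=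
  forall z, pos_le z x -> (M z <-> N z).

Definition eventually (P : nat -> Prop) : Prop := exists n, forall i, n <= i -> P i.

Scheme Ppos_mut_ind := Induction for Ppos Sort Prop
  with Npos_mut_ind := Induction for Npos Sort Prop.

Section Locality.

Variable d : nat.
Implicit Types (M N : game d) (x y z : pos d).

Lemma pos_le_refl x : pos_le x x.
Proof. by []. Qed.

Lemma pos_le_trans x y z : pos_le z y -> pos_le y x -> pos_le z x.
Proof. by move=> hzy hyx j; apply: leq_trans (hzy j) (hyx j). Qed.

Lemma sub_pos_le x y : pos_le [ffun j => x j - y j] x.
Proof. by move=> j; rewrite ffunE leq_subr. Qed.

Lemma option_pos_le M x y : is_option M x y -> pos_le y x.
Proof. by case. Qed.

Lemma agree_below_sym M N x : agree_below M N x -> agree_below N M x.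
Proof. by move=> hMN z hz; apply: iff_sym; apply: hMN. Qed.

Lemma agree_below_le M N x y : pos_le y x -> agree_below M N x -> agree_below M N y.
Proof. by move=> hyx hMN z hzy; exact: hMN (pos_le_trans hzy hyx). Qed.

Lemma is_option_agree_below M N x y :
  agree_below M N x -> is_option M x y -> is_option N x y.
Proof. by move=> hMN [hyx hM]; split=> //; apply/(hMN _ (sub_pos_le x y)). Qed.

Lemma Ppos_agree_below M N x : agree_below M N x -> Ppos M x -> Ppos N x.
Proof.
move=> hMN hP; move: hP hMN.
apply: (@Ppos_mut_ind d M (fun x _ => agree_below M N x -> Ppos N x)
                          (fun x _ => agree_below M N x -> Npos N x)).
- move=> {}x [y0 hy0] _ IH hMN; constructor.
    by exists y0; apply: is_option_agree_below hy0.
  move=> y hNy; have hMy := is_option_agree_below (agree_below_sym hMN) hNy.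
  exact: IH y hMy (agree_below_le (option_pos_le hMy) hMN).
- move=> {}x hno hMN; apply: Npos_noopt => y hNy.
  exact: hno y (is_option_agree_below (agree_below_sym hMN) hNy).
- move=> {}x y hy _ IH hMN; apply: (Npos_P (is_option_agree_below hMN hy)).
  exact: IH (agree_below_le (option_pos_le hy) hMN).
Qed.

Lemma star_agree_below M N x : agree_below M N x -> star M x -> star N x.
Proof.
move=> hMN [hM0 hP]; split; last exact: Ppos_agree_below hP.
by move=> hN0; apply: hM0; apply/hMN => // j; rewrite ffunE.
Qed.

Lemma star_iter_reflexive M : reflexive_game M -> forall i, game_eq (star_iter M i) M.
Proof.
move=> hrefl; elim=> [//|i IH] x /=; split.
- by move=> hS; apply/hrefl; apply: star_agree_below hS => z _; apply: IH.
- by move=> /hrefl hS; apply: star_agree_below hS => z _; apply: iff_sym.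
Qed.

Lemma pos_le_finite x : exists s : seq (pos d), forall z, pos_le z x -> z \in s.
Proof.
pose m := \max_(j < d) x j.
pose emb (f : {ffun 'I_d -> 'I_m.+1}) : pos d := [ffun j => nat_of_ord (f j)].
exists (map emb (enum {ffun 'I_d -> 'I_m.+1})) => z hzx.
have hzm j : z j < m.+1.
  by rewrite ltnS; apply: leq_trans (hzx j) (@leq_bigmax _ (fun j : 'I_d => x j) j).
apply/mapP; exists [ffun j => Ordinal (hzm j)]; first by rewrite mem_enum.
by apply/ffunP => j; rewrite !ffunE.
Qed.

End Locality.

Lemma eventually_all_in (T : eqType) (P : T -> nat -> Prop) (s : seq T) :
  (forall a, eventually (P a)) -> eventually (fun i => forall a, a \in s -> P a i).
Proof.
move=> hP; elim: s => [|a s [n IH]]; first by exists 0.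
have [m hm] := hP a; exists (maxn n m) => i hi b; rewrite inE => /orP[/eqP ->|hb].
- exact: hm (leq_trans (leq_maxr n m) hi).
- exact: IH (leq_trans (leq_maxl n m) hi) b hb.
Qed.

Lemma star_iter_eventually_agree (d : nat) (X M : game d) :
  limit_exists X -> game_eq M (star_limit X) ->
  forall z, eventually (fun i => star_iter X i z <-> M z).
Proof.
move=> hlim hM z; case: (hlim z) => [[n hin]|[n hout]]; exists n => i hi.
- by split=> _; [apply/hM; exists n | apply: hin].
- split=> [/(hout i hi) //|/hM [m hm]].
  by case: (hout (maxn n m) (leq_maxl n m)); apply/hm/leq_maxr.
Qed.

Lemma star_iter_eventually_agree_below (d : nat) (X M : game d) :
  limit_exists X -> game_eq M (star_limit X) ->
  forall x, eventually (fun i => agree_below (star_iter X i) M x).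
Proof.
move=> hlim hM x; have [s hs] := pos_le_finite x.
have [n hn] := eventually_all_in s (star_iter_eventually_agree hlim hM).
by exists n => i hi z hzx; apply: hn => //; apply: hs.
Qed.

Theorem lemma1 (d : nat) (hd : 0 < d) (M : game d) :
  reflexive_game M <->
  exists X : game d, limit_exists X /\ game_eq M (star_limit X).
Proof.
split.
- move=> hrefl; have hiter := star_iter_reflexive hrefl.
  exists M; split.
  + by move=> x; case: (classic (M x)) => hx; [left | right];
      exists 0 => i _; rewrite hiter.
  + move=> x; split; first by move=> hx; exists 0 => i _; apply/hiter.
    by case=> n /(_ n (leqnn n)) /hiter.
- case=> X [hlim hM] x.
  have [n hn] := star_iter_eventually_agree_below hlim hM x.
  have hXn := hn n (leqnn n); have hXn1 := hn n.+1 (leqnSn n).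
  split.
  + move=> /(hXn1 x (pos_le_refl x)) /= hS.
    exact: star_agree_below hXn hS.
  + move=> hS; apply/(hXn1 x (pos_le_refl x)) => /=.
    exact: star_agree_below (agree_below_sym hXn) hS.
Qed.
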